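(* Let $\mathbf A$ be an algebra of type $\tau$ equipped with a partition system $\sigma\mapsto\langle\odot^\sigma_0,\dots,\odot^\sigma_n\rangle$. Let $\equiv$ be the common equivalence relation $\equiv_\odot$ of the left normal bands in the system, let $I\subseteq A$ be a set of representatives of its classes, made into a join-semilattice $\mathbf I=\langle I,\vee\rangle$ by letting $p\vee q$ be the representative of the class of $p\odot q$ (for any $\odot$ of the system), with order $\preceq$, and let $A_p$ denote the class of $p$. Then: (1) each $A_p$ is closed under all operations of $\mathbf A$ of positive arity, and becomes an algebra $\mathbf A_p$ of type $\tau$ by setting $\omega^{\mathbf A_p}:=\omega^{\mathbf A}\odot^\omega_0 p$ for each constant symbol $\omega$; (2) for all $p\preceq q$ in $\mathbf I$ the assignment $\xi_{pq}$ with $\xi^{\sigma i}_{pq}(a):=a\odot^\sigma_i q$ (for each $n$-ary $\sigma$ and $0\le i\le n$, $a\in A_p$) is a well-defined metamorphism $\mathbf A_p\Rightarrow\mathbf A_q$; (3) $\{\xi_{pq}: p\preceq q\}$ is a semilattice directed system of metamorphisms and $\mathbf A$ is its Płonka sum.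
   Context: A left normal band on a set $A$ is a binary operation $\odot$ with $a\odot a=a$, $a\odot(b\odot c)=(a\odot b)\odot c$, $a\odot(b\odot c)=a\odot(c\odot b)$ for all $a,b,c$. Put $a\preceq_\odot b\iff b\odot a=b$ and $a\equiv_\odot b\iff a\preceq_\odot b$ and $b\preceq_\odot a$; then $\preceq_\odot$ is a preorder, $\equiv_\odot$ a congruence, and the quotient is a join-semilattice. Two left normal bands $\odot,\otimes$ on $A$ are homotactic if $\preceq_\odot=\preceq_\otimes$. For an algebra $\mathbf A$ of type $\tau$, a partition system is an assignment to each $n$-ary operation symbol $\sigma$ (constants: $n=0$) of a tuple $\langle\odot^\sigma_0,\dots,\odot^\sigma_n\rangle$ of left normal bands on $A$, all of them (over all $\sigma$) pairwise homotactic, such that for all $a_1,\dots,a_n,b\in A$: (PF4$^\sigma$) if $n\ge1$, $\sigma^{\mathbf A}(a_1,\dots,a_n)\odot^\sigma_0 b=\sigma^{\mathbf A}(a_1\odot^\sigma_1 b,\dots,a_n\odot^\sigma_n b)$; (PF5$^\sigma$) $b\odot^\sigma_0\sigma^{\mathbf A}(a_1,\dots,a_n)=b\odot^\sigma_0a_1\odot^\sigma_0\cdots\odot^\sigma_0a_n$ (for a constant $\omega$: $b\odot^\omega_0\omega^{\mathbf A}=b$). A metamorphism $f:\mathbf A\Rightarrow\mathbf B$ between algebras of type $\tau$ assigns to each $n$-ary symbol $\sigma$ a tuple of maps $f^{\sigma0},\dots,f^{\sigma n}:A\to B$ such that $f^{\sigma0}(\sigma^{\mathbf A}(a_1,\dots,a_n))=\sigma^{\mathbf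 B}(f^{\sigma1}(a_1),\dots,f^{\sigma n}(a_n))$ (for constants $f^{\omega0}(\omega^{\mathbf A})=\omega^{\mathbf B}$); composition and identities are componentwise. A semilattice directed system of metamorphisms over a join-semilattice $\mathbf I$ is a family of pairwise disjoint algebras $\mathbf A_p$ ($p\in I$) with metamorphisms $\xi_{pq}:\mathbf A_p\Rightarrow\mathbf A_q$ for $p\preceq q$ such that $\xi_{pp}$ is the identity and $\xi_{qr}\circ\xi_{pq}=\xi_{pr}$. Its Płonka sum is the algebra on $\biguplus_pA_p$ with $\sigma(a_1,\dots,a_n):=\sigma^{\mathbf A_q}(\xi^{\sigma1}_{p_1q}(a_1),\dots,\xi^{\sigma n}_{p_nq}(a_n))$ for $a_i\in A_{p_i}$, $q=p_1\vee\dots\vee p_n$, and (if $\tau$ has constants, $\mathbf I$ must have a least element $\bot$) $\omega:=\omega^{\mathbf A_\bot}$. *)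

From mathcomp Require Import all_boot.
Set Implicit Arguments. Unset Strict Implicit. Unset Printing Implicit Defensive.

Record signature := Signature { sym : Type; arity : sym -> nat }.

(* Operations of an algebra of type tau on carrier T;
   arguments of an n-ary symbol are indexed by 'I_n (i.e. a_1..a_n = a 0..a (n-1)). *)
Definition ops (tau : signature) (T : Type) :=
  forall s : sym tau, ('I_(arity s) -> T) -> T.

Definition left_normal_band (A : Type) (m : A -> A -> A) :=
  [/\ forall a, m a a = a,
      forall a b c, m a (m b c) = m (m a b) c
    & forall a b c, m a (m b c) = m a (m c b)].

Definition lnb_le (A : Type) (m : A -> A -> A) (a b : A) := m b a = b.
Definition lnb_equiv (A : Type) (m : A -> A -> A) (a b : A) :=
  lnb_le m a b /\ lnb_le m b a.
Definition homotactic (A : Type) (m1 m2 : A -> A -> A) :=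
  forall a b, lnb_le m1 a b <-> lnb_le m2 a b.

(* A tuple of bands <odot^s_0,...,odot^s_n> for each n-ary symbol s,
   with odot^s_i = ps s i, i : 'I_(n+1). *)
Definition band_system (tau : signature) (A : Type) :=
  forall s : sym tau, 'I_(arity s).+1 -> A -> A -> A.

Definition partition_system (tau : signature) (A : Type) (op : ops tau A)
    (ps : band_system tau A) :=
  [/\ forall s i, left_normal_band (ps s i),
      forall s i s' i', homotactic (ps s i) (ps s' i'),
      forall s (a : 'I_(arity s) -> A) b, 0 < arity s ->
        ps s ord0 (op s a) b = op s (fun i => ps s (lift ord0 i) (a i) b)
    &
      forall s (a : 'I_(arity s) -> A) b,
        ps s ord0 b (op s a) = foldl (ps s ord0) b [seq a i | i <- enum 'I_(arity s)]].

Definition sys_equiv (tau : signature) (A : Type) (ps : band_system tau A) (a b : A) :=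
  forall s i, lnb_equiv (ps s i) a b.

Definition metamorphism (tau : signature) (TA TB : Type) (opA : ops tau TA)
    (opB : ops tau TB) (f : forall s : sym tau, 'I_(arity s).+1 -> TA -> TB) :=
  forall s (a : 'I_(arity s) -> TA),
    f s ord0 (opA s a) = opB s (fun i => f s (lift ord0 i) (a i)).

Definition join_semilattice (I : Type) (j : I -> I -> I) :=
  [/\ forall p, j p p = p, forall p q, j p q = j q p
    & forall p q r, j p (j q r) = j (j p q) r].
Definition sl_le (I : Type) (j : I -> I -> I) (p q : I) := j p q = q.

(* The maps xi p q
   are only required to be meaningful when p <= q (their values for other
   pairs are irrelevant).  Disjointness of the A_p is built in by using the
   dependent sum {p : I & Ap p} as their disjoint union. *)
Definition directed_system (tau : signature) (I : Type) (j : I -> I -> I)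
    (Ap : I -> Type) (opp : forall p, ops tau (Ap p))
    (xi : forall p q (s : sym tau), 'I_(arity s).+1 -> Ap p -> Ap q) :=
  [/\ join_semilattice j,
      forall p q, sl_le j p q -> metamorphism (opp p) (opp q) (xi p q),
      forall p s i a, xi p p s i a = a
    & forall p q r s i a, sl_le j p q -> sl_le j q r ->
        xi q r s i (xi p q s i a) = xi p r s i a].

Definition plonka_sum (tau : signature) (I : Type) (j : I -> I -> I)
    (Ap : I -> Type) (opp : forall p, ops tau (Ap p))
    (xi : forall p q (s : sym tau), 'I_(arity s).+1 -> Ap p -> Ap q)
    (opS : ops tau {p : I & Ap p}) :=
  (forall s (a : 'I_(arity s) -> {p : I & Ap p}) p0 rest,
     [seq tag (a i) | i <- enum 'I_(arity s)] = p0 :: rest ->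
     opS s a = existT Ap (foldl j p0 rest)
       (opp (foldl j p0 rest) s
          (fun i => xi (tag (a i)) (foldl j p0 rest) s (lift ord0 i) (tagged (a i)))))
  /\
  (forall s, arity s = 0 ->
     exists bot : I, (forall p, sl_le j bot p) /\
       forall a : 'I_(arity s) -> {p : I & Ap p},
         opS s a = existT Ap bot
           (opp bot s (fun i => xi (tag (a i)) bot s (lift ord0 i) (tagged (a i))))).

Definition rep_type (A : Type) (Ip : A -> Prop) := {p : A | Ip p}.
Definition block (tau : signature) (A : Type) (ps : band_system tau A)
    (Ip : A -> Prop) (p : rep_type Ip) := {a : A | sys_equiv ps a (sval p)}.

From mathcomp Require Import all_boot.
From Stdlib Require Import Classical ClassicalEpsilon FunctionalExtensionality.

(* All bands of a partition system induce one preorder [sys_le], in which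
   [ps s i a b] is a least upper bound of [a] and [b] (band laws and
   homotacticity) and, by PF5, [op s a] is a least upper bound of the [a i].
   Hence the [sys_equiv]-classes form a join-semilattice, an operation of
   positive arity maps each class into itself, and [op s a] lies in the join
   [q] of the classes of its arguments.  Moving an element [a] of a class below
   [q] into [q] by [ps s i a q] lands in [q], and PF4 gives
   [op s (fun i => ps s (lift ord0 i) (a i) q) = ps s ord0 (op s a) q = op s a],
   which is the Plonka-sum formula for [op]. *)

Set Implicit Arguments.
Unset Printing Implicit Defensive.

Section FoldlJoin.

Context {I Z : Type} {le : I -> Z -> Prop} {j : I -> I -> I}.
Hypothesis le_join : forall p q z, le (j p q) z <-> le p z /\ le q z.

Lemma le_foldl_join (T : eqType) (f : T -> I) p0 (s : seq T) z :
  le (foldl j p0 [seq f i | i <- s]) z <->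
  le p0 z /\ forall i, i \in s -> le (f i) z.
Proof.
elim: s p0 => [|x s IHs] p0 /=; first by split=> [|[]].
rewrite IHs le_join; split=> [[[le_p0 le_x] le_s]|[le_p0 le_xs]].
- by split=> // i; rewrite in_cons => /predU1P [->|/le_s].
- split; first by split=> //; apply: le_xs; rewrite mem_head.
  by move=> i s_i; apply: le_xs; rewrite in_cons s_i orbT.
Qed.

End FoldlJoin.

Section LubSemilattice.

Context {I : Type} {le : I -> I -> Prop} {j : I -> I -> I}.
Hypotheses (le_refl : forall p, le p p)
  (le_antisym : forall p q, le p q -> le q p -> p = q)
  (le_join : forall p q z, le (j p q) z <-> le p z /\ le q z).

Let le_joinl p q : le p (j p q). Proof. by have /le_join[] := le_refl (j p q). Qed.
Let le_joinr p q : le q (j p q). Proof. by have /le_join[] := le_refl (j p q). Qed.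

Lemma lub_join_semilattice : join_semilattice j.
Proof.
split=> [p|p q|p q r]; apply: le_antisym.
- by apply/le_join; split; apply: le_refl.
- exact: le_joinl.
- by apply/le_join; split; [apply: le_joinr|apply: le_joinl].
- by apply/le_join; split; [apply: le_joinr|apply: le_joinl].
- have /le_join[le_pq le_r] := le_refl (j (j p q) r).
  have /le_join[le_p le_q] := le_pq.
  by apply/le_join; split=> //; apply/le_join.
- have /le_join[le_p le_qr] := le_refl (j p (j q r)).
  have /le_join[le_q le_r] := le_qr.
  by apply/le_join; split=> //; apply/le_join.
Qed.

Lemma lub_sl_leP p q : sl_le j p q <-> le p q.
Proof.
split=> [<-|le_pq]; first exact: le_joinl.
by apply: le_antisym; [apply/le_join; split|apply: le_joinr].
Qed.

End LubSemilattice.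

Section LeftNormalBand.

Context {A : Type} {m : A -> A -> A}.
Hypothesis band_m : left_normal_band m.

Let mmA : forall a, m a a = a. Proof. by case: band_m. Qed.
Let mA : forall a b c, m a (m b c) = m (m a b) c. Proof. by case: band_m. Qed.
Let mACr : forall a b c, m a (m b c) = m a (m c b). Proof. by case: band_m. Qed.

Lemma lnb_le_refl a : lnb_le m a a.
Proof. exact: mmA. Qed.

Lemma lnb_le_trans a b c : lnb_le m a b -> lnb_le m b c -> lnb_le m a c.
Proof. by rewrite /lnb_le => ba cb; rewrite -{1}cb -mA ba cb. Qed.

Lemma lnb_le_mul a b c : lnb_le m (m a b) c <-> lnb_le m a c /\ lnb_le m b c.
Proof.
split=> [le_ab|[ca cb]]; last by rewrite /lnb_le mA ca cb.
have le_a : lnb_le m a (m a b) by rewrite /lnb_le -mA mACr mA mmA.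
have le_b : lnb_le m b (m a b) by rewrite /lnb_le -mA mmA.
by split; apply: lnb_le_trans le_ab.
Qed.

Lemma lnb_mulr_equiv x y y' : lnb_equiv m y y' -> m x y = m x y'.
Proof. by case=> y'y yy'; rewrite -{1}yy' mACr y'y. Qed.

Lemma foldl_lnb_idP (T : eqType) (f : T -> A) z (s : seq T) :
  foldl m z [seq f i | i <- s] = z <-> forall i, i \in s -> lnb_le m (f i) z.
Proof.
split=> [fold_z i s_i|le_s].
  have : lnb_le m (foldl m z [seq f i | i <- s]) z.
    by rewrite fold_z; apply: lnb_le_refl.
  by case/(le_foldl_join lnb_le_mul) => _; apply.
elim: s le_s => //= x s IHs le_xs.
rewrite [m z (f x)]le_xs ?mem_head // IHs // => i s_i.
by apply: le_xs; rewrite in_cons s_i orbT.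
Qed.

End LeftNormalBand.

Lemma ord_size0F n (i : 'I_n) : n = 0 -> False.
Proof. by case: i => i lt_in n0; rewrite n0 in lt_in. Qed.

Lemma eq_nullary (T : Type) n (f g : 'I_n -> T) : n = 0 -> f = g.
Proof.
by move=> n0; apply: functional_extensionality => i; case: (ord_size0F i n0).
Qed.

Lemma sval_inj_prop (T : Type) (P : T -> Prop) (x y : {t | P t}) :
  sval x = sval y -> x = y.
Proof. exact: (eq_sig_hprop (fun t => proof_irrelevance (P t))). Qed.

Section PartitionSystem.

Variables (tau : signature) (A : Type) (op : ops tau A) (ps : band_system tau A).
Hypothesis ps_op : partition_system op ps.

Let band_ps (s : sym tau) (i : 'I_(arity s).+1) : left_normal_band (ps s i).
Proof. by case: ps_op. Qed.

Definition sys_le (a b : A) := forall s i, lnb_le (ps s i) a b.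

Lemma sys_leP (s : sym tau) (i : 'I_(arity s).+1) a b :
  sys_le a b <-> lnb_le (ps s i) a b.
Proof.
have [_ homo _ _] := ps_op.
by split=> [|le_ab s' i']; [apply|apply/(homo s i)].
Qed.

Lemma sys_le_refl a : sys_le a a.
Proof. by move=> s i; apply: (lnb_le_refl (band_ps s i)). Qed.

Lemma sys_le_trans a b c : sys_le a b -> sys_le b c -> sys_le a c.
Proof.
by move=> ab bc s i; apply: (lnb_le_trans (band_ps s i) (ab s i) (bc s i)).
Qed.

Lemma sys_equivP a b : sys_equiv ps a b <-> sys_le a b /\ sys_le b a.
Proof. by split=> [ab|[ab ba] s i]; [split=> s i; case: (ab s i)|split]. Qed.

Lemma sys_equiv_refl a : sys_equiv ps a a.
Proof. by apply/sys_equivP; split; apply: sys_le_refl. Qed.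

Lemma sys_equiv_sym a b : sys_equiv ps a b -> sys_equiv ps b a.
Proof. by move=> /sys_equivP[ab ba]; apply/sys_equivP. Qed.

Lemma sys_equiv_of_ub a b :
  (forall z, sys_le a z <-> sys_le b z) -> sys_equiv ps a b.
Proof.
move=> ub; apply/sys_equivP.
by split; [apply/ub/sys_le_refl|apply/ub/sys_le_refl].
Qed.

Lemma sys_le_equivl a b z : sys_equiv ps a b -> sys_le a z <-> sys_le b z.
Proof. by case/sys_equivP=> ab ba; split; apply: sys_le_trans. Qed.

Lemma sys_equiv_trans a b c :
  sys_equiv ps a b -> sys_equiv ps b c -> sys_equiv ps a c.
Proof.
move=> ab bc; apply: sys_equiv_of_ub => z.
by rewrite (sys_le_equivl _ ab) (sys_le_equivl _ bc).
Qed.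

Lemma sys_le_ps (s : sym tau) (i : 'I_(arity s).+1) a b z :
  sys_le (ps s i a b) z <-> sys_le a z /\ sys_le b z.
Proof. by rewrite !(sys_leP s i); apply: (lnb_le_mul (band_ps s i)). Qed.

Lemma sys_le_op s (a : 'I_(arity s) -> A) z :
  sys_le (op s a) z <-> forall i, sys_le (a i) z.
Proof.
have [_ _ _ PF5] := ps_op.
rewrite (sys_leP s ord0) /lnb_le PF5 (foldl_lnb_idP (band_ps s ord0)).
split=> le_a i; last by move=> _; apply/(sys_leP s ord0).
by apply/(sys_leP s ord0)/le_a; rewrite mem_enum.
Qed.

Lemma sys_equiv_ps_le (s : sym tau) (i : 'I_(arity s).+1) a b :
  sys_le a b -> sys_equiv ps (ps s i a b) b.
Proof.
move=> ab; apply: sys_equiv_of_ub => z; rewrite sys_le_ps.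
by split=> [[]|bz] //; split=> //; apply: sys_le_trans bz.
Qed.

Lemma sys_equiv_op s (a : 'I_(arity s) -> A) x :
  0 < arity s -> (forall i, sys_equiv ps (a i) x) -> sys_equiv ps (op s a) x.
Proof.
move=> s_gt0 ax; apply: sys_equiv_of_ub => z; rewrite sys_le_op.
split=> [/(_ (Ordinal s_gt0))|xz i]; rewrite (sys_le_equivl _ (ax _)) //.
Qed.

Lemma exists_sys_join a b :
  exists r, forall z, sys_le r z <-> sys_le a z /\ sys_le b z.
Proof.
have [[s]|no_sym] := classic (inhabited (sym tau)).
  by exists (ps s ord0 a b); apply: sys_le_ps.
have all_le x y : sys_le x y by move=> s; case: no_sym.
by exists a => z; split=> // _; split.
Qed.

Definition sys_join a b : A :=
  sval (constructive_indefinite_description _ (exists_sys_join a b)).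

Lemma sys_le_join a b z : sys_le (sys_join a b) z <-> sys_le a z /\ sys_le b z.
Proof. by rewrite /sys_join; case: constructive_indefinite_description. Qed.

End PartitionSystem.

Section Representatives.

Variables (tau : signature) (A : Type) (op : ops tau A) (ps : band_system tau A).
Hypothesis ps_op : partition_system op ps.
Variable Ip : A -> Prop.
Hypothesis rep_unique : forall a, exists! p, Ip p /\ sys_equiv ps p a.

Local Notation I := (rep_type Ip).

Lemma exists_rep a : exists p : I, sys_equiv ps (sval p) a.
Proof. by have [p [[Ip_p pa] _]] := rep_unique a; exists (exist _ p Ip_p). Qed.

Definition rep (a : A) : I :=
  sval (constructive_indefinite_description _ (exists_rep a)).

Lemma rep_equiv a : sys_equiv ps (sval (rep a)) a.
Proof. by rewrite /rep; case: constructive_indefinite_description. Qed.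

Lemma rep_eq (p q : I) : sys_equiv ps (sval p) (sval q) -> p = q.
Proof.
move=> pq; apply: sval_inj_prop.
have [r [_ uniq_r]] := rep_unique (sval q).
rewrite -(uniq_r _ (conj (svalP p) pq)); apply: uniq_r.
by split; [apply: svalP|apply: (sys_equiv_refl ps_op)].
Qed.

Definition rep_le (p q : I) := sys_le ps (sval p) (sval q).

Lemma rep_le_refl p : rep_le p p.
Proof. exact: (sys_le_refl ps_op). Qed.

Lemma rep_le_antisym p q : rep_le p q -> rep_le q p -> p = q.
Proof. by move=> pq qp; apply/rep_eq/sys_equivP. Qed.

Definition rjoin (p q : I) : I := rep (sys_join ps_op (sval p) (sval q)).

Lemma sys_le_rjoin p q z :
  sys_le ps (sval (rjoin p q)) z <-> sys_le ps (sval p) z /\ sys_le ps (sval q) z.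
Proof. by rewrite (sys_le_equivl ps_op _ (rep_equiv _)) sys_le_join. Qed.

Lemma rjoin_equiv p q s (i : 'I_(arity s).+1) :
  sys_equiv ps (sval (rjoin p q)) (ps s i (sval p) (sval q)).
Proof.
by apply: (sys_equiv_of_ub ps_op) => z; rewrite sys_le_rjoin (sys_le_ps ps_op).
Qed.

Lemma rep_le_rjoin p q r : rep_le (rjoin p q) r <-> rep_le p r /\ rep_le q r.
Proof. exact: sys_le_rjoin. Qed.

Lemma rjoin_semilattice : join_semilattice rjoin.
Proof. exact: lub_join_semilattice rep_le_refl rep_le_antisym rep_le_rjoin. Qed.

Lemma sl_le_rjoinP p q : sl_le rjoin p q <-> rep_le p q.
Proof. exact: lub_sl_leP rep_le_refl rep_le_antisym rep_le_rjoin p q. Qed.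

Lemma rep_le_trans p q r : rep_le p q -> rep_le q r -> rep_le p r.
Proof. exact: (sys_le_trans ps_op). Qed.

Definition block_op_val (p : I) s (a : 'I_(arity s) -> A) : A :=
  if 0 < arity s then op s a else ps s ord0 (op s a) (sval p).

Lemma block_op_equiv p s (a : 'I_(arity s) -> block ps p) :
  sys_equiv ps (block_op_val p s (fun i => sval (a i))) (sval p).
Proof.
rewrite /block_op_val; case: ifPn => [s_gt0|_].
  by apply: (sys_equiv_op ps_op s _ s_gt0) => i; apply: (svalP (a i)).
apply: (sys_equiv_ps_le ps_op); apply/(sys_le_op ps_op) => i.
by case/sys_equivP: (svalP (a i)).
Qed.

Definition block_op (p : I) : ops tau (block ps p) :=
  fun s a => exist (fun x => sys_equiv ps x (sval p)) _ (block_op_equiv s a).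
Arguments block_op : clear implicits.

Lemma transition_equiv p q s (i : 'I_(arity s).+1) (a : block ps p) :
  rep_le p q -> sys_equiv ps (ps s i (sval a) (sval q)) (sval q).
Proof.
move=> pq; apply: (sys_equiv_ps_le ps_op); apply: (sys_le_trans ps_op) pq.
by case/sys_equivP: (svalP a).
Qed.

(* Off [rep_le p q] the value is irrelevant; [sval q] is a placeholder. *)
Definition transition (p q : I) s (i : 'I_(arity s).+1) (a : block ps p) :
    block ps q :=
  match excluded_middle_informative (rep_le p q) with
  | left pq =>
      exist (fun x => sys_equiv ps x (sval q)) _ (transition_equiv s i a pq)
  | right _ =>
      exist (fun x => sys_equiv ps x (sval q)) _ (sys_equiv_refl ps_op (sval q))
  end.
Arguments transition : clear implicits.

Lemma transitionE p q s (i : 'I_(arity s).+1) (a : block ps p) :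
  rep_le p q -> sval (transition p q s i a) = ps s i (sval a) (sval q).
Proof. by rewrite /transition; case: excluded_middle_informative. Qed.

Lemma transition_id p s (i : 'I_(arity s).+1) (a : block ps p) :
  transition p p s i a = a.
Proof.
apply: sval_inj_prop; rewrite transitionE; last exact: rep_le_refl.
by case: (svalP a s i).
Qed.

Lemma transition_comp p q r s (i : 'I_(arity s).+1) (a : block ps p) :
  rep_le p q -> rep_le q r ->
  transition q r s i (transition p q s i a) = transition p r s i a.
Proof.
move=> pq qr; apply: sval_inj_prop.
rewrite !transitionE //; last exact: rep_le_trans qr.
have [band _ _ _] := ps_op; have [_ mA _] := band s i.
by rewrite -mA (lnb_mulr_equiv (band s i) _ (sys_equiv_ps_le ps_op s i qr s i)).
Qed.

Lemma metamorphism_transition p q :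
  rep_le p q -> metamorphism (block_op p) (block_op q) (transition p q).
Proof.
move=> pq s a; apply: sval_inj_prop; rewrite transitionE //= /block_op_val.
have [band _ PF4 _] := ps_op.
case: ifPn => [s_gt0|]; first rewrite PF4 //.
  by congr (op s _); apply: functional_extensionality => i; rewrite transitionE.
rewrite -eqn0Ngt => /eqP s0; have [_ mA _] := band s ord0.
have pq_q := sys_equiv_ps_le ps_op s ord0 pq s ord0.
rewrite -mA (lnb_mulr_equiv (band s ord0) _ pq_q).
by congr (ps s ord0 (op s _) _); apply: eq_nullary.
Qed.

Lemma directed_system_transition : directed_system rjoin block_op transition.
Proof.
split=> [||p s i a|p q r s i a /sl_le_rjoinP pq /sl_le_rjoinP qr].
- exact: rjoin_semilattice.
- by move=> p q /sl_le_rjoinP; apply: metamorphism_transition.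
- exact: transition_id.
- exact: transition_comp.
Qed.

Lemma eq_block_existT (p q : I) (x : block ps p) (y : block ps q) :
  p = q -> sval x = sval y -> existT (fun r => block ps r) p x = existT _ q y.
Proof. by move=> pq; subst q => /sval_inj_prop ->. Qed.

Definition embed (a : A) : {p : I & block ps p} :=
  existT (fun p => block ps p) (rep a)
    (exist (fun x => sys_equiv ps x (sval (rep a))) a
       (sys_equiv_sym (rep_equiv a))).

Lemma embed_bij : bijective embed.
Proof.
exists (fun x : {p : I & block ps p} => sval (tagged x)) => // -[p [a pa]].
apply: eq_block_existT => //=; apply: rep_eq.
exact: (sys_equiv_trans ps_op (rep_equiv a) pa).
Qed.

Definition sum_op : ops tau {p : I & block ps p} :=
  fun s a => embed (op s (fun i => sval (tagged (a i)))).

Lemma sum_op_join s (a : 'I_(arity s) -> {p : I & block ps p}) p0 rest :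
  [seq tag (a i) | i <- enum 'I_(arity s)] = p0 :: rest ->
  sum_op s a = existT _ (foldl rjoin p0 rest)
    (block_op (foldl rjoin p0 rest) s
       (fun i => transition (tag (a i)) (foldl rjoin p0 rest) s (lift ord0 i)
                   (tagged (a i)))).
Proof.
case E: (enum 'I_(arity s)) => [//|i0 t] /= [<- <-].
have s_gt0 : 0 < arity s by rewrite -[arity s]size_enum_ord E.
set J := foldl _ _ _; set b := fun i => sval (tagged (a i)).
have le_tag i z : sys_le ps (b i) z <-> sys_le ps (sval (tag (a i))) z.
  exact: (sys_le_equivl ps_op z (svalP (tagged (a i)))).
have le_J z : sys_le ps (sval J) z <-> forall i, sys_le ps (b i) z.
  rewrite (le_foldl_join (le := fun p z => sys_le ps (sval p) z) sys_le_rjoin).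
  split=> [[le_i0 le_t] i|le_b]; rewrite ?le_tag.
    have : i \in i0 :: t by rewrite -E mem_enum.
    by rewrite in_cons => /predU1P[->|/le_t].
  by split=> [|i _]; rewrite -le_tag.
have b_J : sys_equiv ps (op s b) (sval J).
  by apply: (sys_equiv_of_ub ps_op) => z; rewrite (sys_le_op ps_op) le_J.
apply: eq_block_existT; first exact/rep_eq/(sys_equiv_trans ps_op (rep_equiv _)).
have [_ _ PF4 _] := ps_op.
rewrite /= /block_op_val s_gt0.
transitivity (op s (fun i => ps s (lift ord0 i) (b i) (sval J))).
  by rewrite -PF4 //; case: (b_J s ord0) => _ ->.
congr (op s _); apply: functional_extensionality => i; rewrite transitionE //.
by apply/le_tag; apply: (le_J _).1 (sys_le_refl ps_op _) i.
Qed.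

Lemma sum_op_nullary s : arity s = 0 ->
  exists bot : I, (forall p, sl_le rjoin bot p) /\
    forall a : 'I_(arity s) -> {p : I & block ps p},
      sum_op s a = existT _ bot
        (block_op bot s
           (fun i => transition (tag (a i)) bot s (lift ord0 i) (tagged (a i)))).
Proof.
move=> s0; have [b] : inhabited ('I_(arity s) -> A).
  by constructor => i; case: (ord_size0F i s0).
exists (rep (op s b)); split=> [p|a].
  apply/sl_le_rjoinP; apply/(sys_le_equivl ps_op _ (rep_equiv _)).
  by apply/(sys_le_op ps_op) => i; case: (ord_size0F i s0).
have op_b f : op s f = op s b by rewrite (eq_nullary f b s0).
rewrite /sum_op op_b; apply: eq_block_existT => //=.
rewrite /block_op_val ifF ?s0 // [op s (fun i => sval _)]op_b.
by case: (rep_equiv (op s b) s ord0) => ->.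
Qed.

Lemma plonka_sum_sum_op : plonka_sum rjoin block_op transition sum_op.
Proof. exact: conj sum_op_join sum_op_nullary. Qed.

End Representatives.

Theorem theorem4p5 (tau : signature) (A : Type) (op : ops tau A)
    (ps : band_system tau A) (Hps : partition_system op ps)
    (Ip : A -> Prop)
    (HI : forall a : A, exists! p : A, Ip p /\ sys_equiv ps p a) :
  exists j : rep_type Ip -> rep_type Ip -> rep_type Ip,
    (forall p q s i, sys_equiv ps (sval (j p q)) (ps s i (sval p) (sval q))) /\
    exists opp : forall p : rep_type Ip, ops tau (block ps p),
      (forall p s (a : 'I_(arity s) -> block ps p), 0 < arity s ->
         sval (opp p s a) = op s (fun i => sval (a i))) /\
      (forall p s (a : 'I_(arity s) -> block ps p), arity s = 0 ->
         sval (opp p s a) = ps s ord0 (op s (fun i => sval (a i))) (sval p)) /\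
    exists xi : forall (p q : rep_type Ip) (s : sym tau),
                  'I_(arity s).+1 -> block ps p -> block ps q,
      (forall p q s i (a : block ps p), sl_le j p q ->
         sval (xi p q s i a) = ps s i (sval a) (sval q)) /\
      (forall p q, sl_le j p q -> metamorphism (opp p) (opp q) (xi p q)) /\
      directed_system j opp xi /\
      exists opS : ops tau {p : rep_type Ip & block ps p},
        plonka_sum j opp xi opS /\
        exists h : A -> {p : rep_type Ip & block ps p},
          bijective h /\ (forall a, sval (tagged (h a)) = a) /\
          (forall s (a : 'I_(arity s) -> A), h (op s a) = opS s (fun i => h (a i))).
Proof.
exists (rjoin Hps HI); split; first exact: rjoin_equiv.
exists (block_op Hps (Ip:=Ip)); split.
  by move=> p s a s_gt0; rewrite /= /block_op_val s_gt0.
split; first by move=> p s a s0; rewrite /= /block_op_val ifF ?s0.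
exists (transition Hps (Ip:=Ip)); split.
  by move=> p q s i a /sl_le_rjoinP; apply: transitionE.
split; first by move=> p q /sl_le_rjoinP; apply: metamorphism_transition.
split; first exact: directed_system_transition.
exists (sum_op op HI); split; first exact: plonka_sum_sum_op.
exists (embed Ip HI); split; first exact: (embed_bij Hps Ip HI).
by split=> [a|s a].
Qed.
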